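(* Let $G$ be a finite abelian group of odd order and consider any 2-coloring of $G$. Then the number of monochromatic nontrivial three-term arithmetic progressions $\{x,x+d,x+2d\}$ ($d\ne0$, counted as unordered sets) is at least $(|G|^2-4|G|+3)/8$, i.e. a fraction at least $\frac14-\frac{3}{4|G|}$ of all $\binom{|G|}{2}$ such progressions. Consequently there is a nonzero $d\in G$ such that $|G|^{-1}|\{x: x,x+d,x+2d\text{ same color}\}|\ge\frac14-\frac{3}{4|G|}$; in particular, if $|G|\ge\frac34\epsilon^{-1}$ some nonzero $d$ has this density at least $\frac14-\epsilon$. *)

From HB Require Import structures.
From mathcomp Require Import all_boot all_order all_algebra.
Set Implicit Arguments. Unset Strict Implicit. Unset Printing Implicit Defensive.
Import Order.TTheory GRing.Theory Num.Theory.

Definition mono3 (G : finZmodType) (c : G -> bool) (x d : G) : bool :=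
  (c x == c (x + d)%R) && (c (x + d)%R == c (x + d *+ 2)%R).

(* Each unordered progression {x,x+d,x+2d} corresponds to exactly the two
   pairs (x,d) and (x+2d,-d), so the number of progressions counted as
   unordered objects is half of this (total number of them: |G|(|G|-1)/2). *)
Definition mono_ordered (G : finZmodType) (c : G -> bool) : nat :=
  #|[set p : G * G | (p.2 != 0%R) && mono3 c p.1 p.2]|.

Definition mono_count_d (G : finZmodType) (c : G -> bool) (d : G) : nat :=
  #|[set x : G | mono3 c x d]|.

(* Call a pair (u, v) bichromatic when c u != c v.  A progression x, x+d, x+2d
   with d != 0 that is not monochromatic contains exactly two bichromatic pairs
   among (x, x+d), (x+d, x+2d), (x, x+2d), so twice the number of
   non-monochromatic pairs (x, d) is a sum of three counts of pairs (u, u + e d),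
   with e = 1, 1, 2.  As d |-> 2d is a bijection of G when |G| is odd, each count
   is the number T = 2ab of ordered bichromatic pairs, a and b being the sizes of
   the colour classes; and a + b = |G| odd gives 4ab <= |G|^2 - 1.  So at most
   3(|G|^2 - 1)/4 pairs (x, d) with d != 0 are not monochromatic, and averaging
   the monochromatic ones over the |G| - 1 nonzero d gives a good d. *)
From HB Require Import structures.
From mathcomp Require Import all_boot all_order all_fingroup all_solvable all_algebra.
From mathcomp Require Import zify ring lra.
Import Order.TTheory GRing.Theory Num.Theory.
Set Implicit Arguments. Unset Strict Implicit.

Local Open Scope ring_scope.

Lemma mulr2n_inj (G : finZmodType) : odd #|G| -> injective (fun d : G => d *+ 2).
Proof.
move=> oddG x y /= /eqP; rewrite -subr_eq0 -mulrnBl => /eqP dbl0.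
apply/eqP; rewrite -subr_eq0 -order_eq1 -dvdn1.
have <- : gcdn 2 #|G| = 1%N by apply/eqP; rewrite -/(coprime 2 _) coprime2n.
by rewrite dvdn_gcd order_dvdn FinRing.zmodXgE dbl0 eqxx -cardsT order_dvdG ?inE.
Qed.

Local Close Scope ring_scope.

Lemma double_neq3 (a b c : bool) :
  2 * ~~ [&& a == b & b == c] = (a != b) + (b != c) + (a != c).
Proof. by case: a; case: b; case: c. Qed.

Lemma odd_add_mul_bound (a b : nat) : odd (a + b) -> 4 * (a * b) + 1 <= (a + b) * (a + b).
Proof.
case: (ltngtP a b) => [ab|ba|-> /[!addnn] /[!odd_double] //] _.
- have [k ->] : exists k, b = a + k.+1 by exists (b - a).-1; lia.
  nia.
- have [k ->] : exists k, a = b + k.+1 by exists (a - b).-1; lia.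
  nia.
Qed.

Lemma exists_ge_average (I : finType) (P : pred I) (F : I -> nat) : 0 < #|P| ->
  exists2 i, P i & \sum_(j | P j) F j <= #|P| * F i.
Proof.
move=> P_gt0; have [i Pi maxFi] := eq_bigmax_cond F P_gt0.
exists i => //; rewrite -maxFi -sum_nat_const.
by apply: leq_sum => j Pj; apply: leq_bigmax_cond.
Qed.

Section MonochromaticCount.
Variables (G : finZmodType) (c : G -> bool).

Definition bichromatic_pairs := \sum_(x : G) \sum_(y : G) (c x != c y).

Definition nonmono_ordered := \sum_(x : G) \sum_(d : G) ~~ mono3 c x d.

Lemma sum_bichromatic_shift (g h : G -> G) : injective (fun d => h d - g d)%R ->
  \sum_(x : G) \sum_(d : G) (c (x + g d)%R != c (x + h d)%R) = bichromatic_pairs.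
Proof.
move=> inj_hg; rewrite exchange_big /bichromatic_pairs [RHS]exchange_big /=.
transitivity (\sum_(d : G) \sum_(x : G) (c x != c (x + (h d - g d))%R)).
  apply: eq_bigr => d _; rewrite [RHS](reindex_inj (addIr (g d))) /=.
  by apply: eq_bigr => x _; rewrite addrA addrAC addrK.
rewrite exchange_big [RHS]exchange_big /=; apply: eq_bigr => x _.
rewrite [RHS](reindex_inj (addrI x)) [RHS](reindex_inj inj_hg) /=.
by apply: eq_bigr => d _; rewrite addrC.
Qed.

Lemma double_nonmono : odd #|G| -> 2 * nonmono_ordered = 3 * bichromatic_pairs.
Proof.
move=> oddG.
have bichrom_01 : \sum_(x : G) \sum_(d : G) (c x != c (x + d)%R) = bichromatic_pairs.
  rewrite -(@sum_bichromatic_shift (fun=> 0%R) id) => [|u v]; last by rewrite !subr0.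
  by apply: eq_bigr => x _; apply: eq_bigr => d _; rewrite addr0.
have bichrom_12 :
    \sum_(x : G) \sum_(d : G) (c (x + d)%R != c (x + d *+ 2)%R) = bichromatic_pairs.
  by rewrite -(@sum_bichromatic_shift id (fun d => d *+ 2)%R) => // u v; rewrite !mulr2n !addrK.
have bichrom_02 : \sum_(x : G) \sum_(d : G) (c x != c (x + d *+ 2)%R) = bichromatic_pairs.
  rewrite -(@sum_bichromatic_shift (fun=> 0%R) (fun d => d *+ 2)%R) => [|u v].
    by apply: eq_bigr => x _; apply: eq_bigr => d _; rewrite addr0.
  by rewrite !subr0; apply: mulr2n_inj.
rewrite /nonmono_ordered big_distrr /= -[3]/(1 + 1 + 1) !mulnDl !mul1n.
rewrite -{1}bichrom_01 -{1}bichrom_12 -bichrom_02 -!big_split /=.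
apply: eq_bigr => x _; rewrite big_distrr -!big_split /=.
by apply: eq_bigr => d _; rewrite double_neq3.
Qed.

Lemma mono_ordered_sum :
  mono_ordered c = \sum_(x : G) \sum_(d : G) ((d != 0%R) && mono3 c x d).
Proof.
rewrite /mono_ordered -sum1_card big_mkcond pair_bigA /=.
by apply: eq_bigr => -[x d] _; rewrite inE; case: (_ && _).
Qed.

Lemma mono_ordered_sum_count_d :
  mono_ordered c = \sum_(d | d != 0%R) mono_count_d c d.
Proof.
rewrite mono_ordered_sum exchange_big [RHS]big_mkcond /=; apply: eq_bigr => d _.
case: (d != 0%R); last by rewrite big1.
rewrite /mono_count_d -sum1_card [RHS]big_mkcond /=.
by apply: eq_bigr => x _; rewrite inE; case: mono3.
Qed.

Lemma mono3_0 (x : G) : mono3 c x 0%R.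
Proof. by rewrite /mono3 mul0rn addr0 !eqxx. Qed.

Lemma mono_add_nonmono : mono_ordered c + nonmono_ordered + #|G| = #|G| * #|G|.
Proof.
have sum_eq0 : \sum_(d : G) (d == 0%R) = 1 by rewrite (bigD1 0%R) //= eqxx big1 // => d /negbTE ->.
rewrite mono_ordered_sum /nonmono_ordered -[in LHS](muln1 #|G|) -sum_eq0 -sum_nat_const.
rewrite -sum_nat_const -!big_split /=; apply: eq_bigr => x _.
rewrite -sum1_card -!big_split /=; apply: eq_bigr => d _.
by case: eqVneq => [->|_]; rewrite ?mono3_0 //=; case: mono3.
Qed.

Lemma bichromatic_pairs_bound : odd #|G| -> 2 * bichromatic_pairs + 1 <= #|G| * #|G|.
Proof.
pose a := \sum_(y : G) c y; pose b := \sum_(y : G) ~~ c y.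
have ab : a + b = #|G|.
  by rewrite -big_split -sum1_card; apply: eq_bigr => y _; case: (c y).
have -> : bichromatic_pairs = a * b + b * a.
  rewrite /bichromatic_pairs !big_distrl -big_split /=; apply: eq_bigr => x _.
  by case: (c x); rewrite /= ?mul1n ?mul0n ?addn0; apply: eq_bigr => y _; case: (c y).
by rewrite -ab (mulnC b) => /odd_add_mul_bound; lia.
Qed.

End MonochromaticCount.

Lemma mono_ordered_lower_bound (G : finZmodType) (c : G -> bool) : odd #|G| ->
  #|G| * #|G| + 3 <= 4 * mono_ordered c + 4 * #|G|.
Proof.
move=> oddG; have := mono_add_nonmono c; have := double_nonmono c oddG.
have := bichromatic_pairs_bound c oddG; lia.
Qed.

Lemma exists_mono_count_d_ge (G : finZmodType) (c : G -> bool) : odd #|G| -> 1 < #|G| ->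
  exists2 d : G, d != 0%R & #|G| <= 4 * mono_count_d c d + 3.
Proof.
move=> oddG G_gt1; have card_nz : #|[pred d : G | d != 0%R]| = #|G|.-1.
  by rewrite (cardC1 0%R).
have [|d nz_d avg] := exists_ge_average (mono_count_d c) (P := [pred d : G | d != 0%R]).
  by rewrite card_nz; lia.
exists d => //; have := mono_ordered_lower_bound c oddG.
rewrite mono_ordered_sum_count_d; move: avg; rewrite card_nz.
have [k ->] : exists k, #|G| = k.+2 by exists #|G|.-2; lia.
rewrite -(@leq_pmul2l k.+1) //=; set S := \sum_(_ | _) _; nia.
Qed.

Local Open Scope ring_scope.

Theorem mainTheorem15 (G : finZmodType) (R : realFieldType) (c : G -> bool) :
  odd #|G| ->
  let n : R := #|G|%:R in
  [/\ (mono_ordered c)%:R / 2 >= (n ^+ 2 - 4 * n + 3) / 8,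
      (1 < #|G|)%N -> exists2 d : G, d != 0 & (mono_count_d c d)%:R / n >= 1 / 4 - 3 / (4 * n)
    & (1 < #|G|)%N -> forall eps : R, 0 < eps -> n >= 3 / 4 * eps^-1 ->
      exists2 d : G, d != 0 & (mono_count_d c d)%:R / n >= 1 / 4 - eps].
Proof.
move=> oddG n.
have density : (1 < #|G|)%N ->
    exists2 d : G, d != 0 & (mono_count_d c d)%:R / n >= 1 / 4 - 3 / (4 * n).
  move=> G_gt1; have [d nz_d] := exists_mono_count_d_ge c oddG G_gt1.
  rewrite -(ler_nat R) natrD natrM => count_ge; exists d => //.
  have n_gt0 : 0 < n by rewrite ltr0n; lia.
  rewrite -subr_ge0; have -> : (mono_count_d c d)%:R / n - (1 / 4 - 3 / (4 * n)) =
      (4 * (mono_count_d c d)%:R + 3 - n) / (4 * n) by field; lra.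
  by apply: divr_ge0; lra.
split => // [|G_gt1 eps eps_gt0 n_ge]; first rewrite expr2.
  have := mono_ordered_lower_bound c oddG; rewrite -(ler_nat R) !natrD !natrM -/n; lra.
have [d nz_d density_d] := density G_gt1; exists d => //.
have n_gt0 : 0 < n by rewrite ltr0n; lia.
have : 3 / (4 * n) <= eps.
  move: n_ge; rewrite ler_pdivrMr ?ler_pdivrMr ?mulr_gt0 //; nra.
lra.
Qed.
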